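(* For $n\ge 1$, the number of shallow $123$-avoiding involutions in $S_n$ equals $\lfloor n^2/4\rfloor+1$.
   Context: For $\pi\in S_n$: $D(\pi)=\sum_{i}|\pi_i-i|$, $I(\pi)$ is the number of inversions, $T(\pi)=n-\mathrm{cyc}(\pi)$ with $\mathrm{cyc}$ the number of cycles in the disjoint cycle decomposition; $\pi$ is shallow if $I(\pi)+T(\pi)=D(\pi)$. A permutation avoids a pattern $\sigma$ if it has no subsequence order-isomorphic to $\sigma$. An involution is a permutation with $\pi=\pi^{-1}$. *)

From mathcomp Require Import all_boot all_order all_fingroup.
From mathcomp Require Import ssrint.
Set Implicit Arguments. Unset Strict Implicit. Unset Printing Implicit Defensive.

(* Permutations of {1..n} are modelled as 'S_n, permutations of 'I_n = {0..n-1};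
   the shift by one changes none of the statistics below. *)

Definition total_disp n (s : 'S_n) : nat := \sum_(i : 'I_n) `|(s i : nat) - (i : nat)|%N.

Definition inv_count n (s : 'S_n) : nat :=
  #|[set p : 'I_n * 'I_n | (p.1 < p.2) && (s p.2 < s p.1)]|.

Definition cyc n (s : 'S_n) : nat := #|porbits s|.
Definition transp_dist n (s : 'S_n) : nat := n - cyc s.

Definition shallow n (s : 'S_n) : bool :=
  inv_count s + transp_dist s == total_disp s.

Definition avoids123 n (s : 'S_n) : bool :=
  [forall i : 'I_n, forall j : 'I_n, forall k : 'I_n,
     ~~ [&& i < j, j < k, s i < s j & s j < s k]].

Definition involution n (s : 'S_n) : bool := (s^-1)%g == s.

From mathcomp Require Import all_boot all_order all_fingroup.
From mathcomp Require Import zify.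
Set Implicit Arguments. Unset Strict Implicit. Unset Printing Implicit Defensive.

(* For an involution s, D = I + T + 2c, where c counts the crossing pairs of arcs
   i < j < s i < s j.  Each of D, I, T and c is a sum, over ordered pairs of arcs
   (i, s i), (j, s j), of a local term, and the identity holds term by term once
   the terms are averaged over the eight symmetries of a pair of arcs (swapping
   the ends of either arc, exchanging the two arcs).  Hence the shallow
   involutions are exactly the noncrossing ones.
   Let x be the first point where a noncrossing 123-avoiding involution s differs
   from the reversal k |-> n-1-k.  Noncrossing makes [x, s x] and (s x, n-1-x]
   invariant, and 123-avoidance makes s decreasing on both, so s reverses each of
   them.  These involutions are parametrised by x < y < n - x, plus the reversal
   itself: floor(n^2/4) + 1 of them. *)

Lemma card_set_sum (T : finType) (P : pred T) : #|[set x | P x]| = \sum_x (P x : nat).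
Proof. by rewrite -sum1dep_card big_mkcond. Qed.

Lemma sum_ord_between N a c :
  \sum_(j < N) ((a < j) && (j < c) : nat) = minn c N - minn a.+1 N.
Proof.
elim: N => [|N IH]; first by rewrite big_ord0; lia.
by rewrite big_ord_recr /= IH; case: (ltnP a N); case: (ltnP N c) => /=; lia.
Qed.

Lemma sum_ord_eq n (i : 'I_n) : \sum_(j < n) ((j : nat) == i : nat) = 1.
Proof.
rewrite (bigD1 i) //= eqxx big1 // => j.
by rewrite -val_eqE => /negbTE ->.
Qed.

Lemma involutionP n (s : 'S_n) : reflect (involutive s) (involution s).
Proof.
apply: (iffP eqP) => [sV i | sK]; first by rewrite -{1}sV permK.
by apply/permP => i; rewrite -{1}(sK i) permK.
Qed.

Section Involution.
Variables (n : nat) (s : 'S_n).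
Hypothesis sK : involutive s.

Lemma porbit_involution x y : y \in porbit s x -> y = x \/ y = s x.
Proof.
case/porbitP => k ->; elim: k => [|k IH]; first by left; rewrite expg0 perm1.
by rewrite expgSr permM; case: IH => ->; [right | left].
Qed.

Lemma cyc_involution : cyc s = #|[set i | s i <= i]|.
Proof.
rewrite /cyc /porbits.
have -> : porbit s @: 'I_n = porbit s @: [set i | s i <= i].
  apply/setP => X; apply/imsetP/imsetP => -[x _ ->]; last by exists x.
  case: (leqP (s x) x) => h; first by exists x; rewrite ?inE.
  exists (s x); first by rewrite inE sK ltnW.
  apply/eqP; rewrite eq_porbit_mem porbit_sym; have := mem_porbit s 1 x; by rewrite expg1.
rewrite card_in_imset // => i j /=; rewrite !inE => hi hj e.
have : j \in porbit s i by rewrite e porbit_id.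
case/porbit_involution => ji; first by rewrite ji.
by apply: val_inj; move: hi hj; rewrite ji sK /=; lia.
Qed.

Lemma transp_dist_involution : transp_dist s = \sum_(i < n) (i < s i : nat).
Proof.
rewrite /transp_dist cyc_involution card_set_sum.
have total : \sum_(i < n) ((s i <= i : nat) + (i < s i)) = n.
  by rewrite (eq_bigr (fun _ => 1)) ?sum_nat_const ?card_ord ?muln1 // => i _; lia.
by rewrite -{1}total big_split /= addKn.
Qed.

End Involution.

Definition cover_term (a a' b b' : nat) : nat := (a < b <= a') + (a' < b <= a).
Definition inversion_term (a a' b b' : nat) : nat := (a < b) && (b' < a').
Definition crossing_term (a a' b b' : nat) : nat := [&& a < b, b < a' & a' < b'].
Definition endpoint_term (a a' b b' : nat) : nat := 2 * (a != a') * ((b == a) + (b == a')).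

Definition sym_fst (g : nat -> nat -> nat -> nat -> nat) a a' b b' := g a a' b b' + g a' a b b'.
Definition sym_snd (g : nat -> nat -> nat -> nat -> nat) a a' b b' := g a a' b b' + g a a' b' b.
Definition sym_exch (g : nat -> nat -> nat -> nat -> nat) a a' b b' := g a a' b b' + g b b' a a'.
Definition symmetrize g := sym_exch (sym_snd (sym_fst g)).

(* The hypotheses hold when (a, a') and (b, b') are arcs of one involution. *)
Lemma symmetrize_cover_term a a' b b' : (a == b) = (a' == b') -> (a == b') = (a' == b) ->
  symmetrize cover_term a a' b b' =
  symmetrize (fun a a' b b' => inversion_term a a' b b' + 2 * crossing_term a a' b b') a a' b b'
  + endpoint_term a a' b b'.
Proof.
rewrite /symmetrize /sym_exch /sym_snd /sym_fst.
rewrite /cover_term /inversion_term /crossing_term /endpoint_term.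
case: (ltngtP a b); case: (ltngtP a a'); case: (ltngtP a b'); case: (ltngtP a' b);
  case: (ltngtP a' b'); case: (ltngtP b b') => //= *; lia.
Qed.

Definition noncrossing n (s : 'S_n) : bool :=
  [forall i : 'I_n, forall j : 'I_n, ~~ [&& i < j, j < s i & s i < s j]].

Section ArcSums.
Variables (n : nat) (s : 'S_n).
Hypothesis sK : involutive s.

Definition arc_sum (g : nat -> nat -> nat -> nat -> nat) :=
  \sum_(i < n) \sum_(j < n) g i (s i) j (s j).

Lemma arc_sumD g h :
  arc_sum (fun a a' b b' => g a a' b b' + h a a' b b') = arc_sum g + arc_sum h.
Proof. by rewrite /arc_sum -big_split; apply: eq_bigr => i _; rewrite big_split. Qed.

Lemma arc_sumMn k g : arc_sum (fun a a' b b' => k * g a a' b b') = k * arc_sum g.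
Proof. by rewrite /arc_sum big_distrr; apply: eq_bigr => i _; rewrite big_distrr. Qed.

Lemma arc_sum_sym_fst g : arc_sum (sym_fst g) = 2 * arc_sum g.
Proof.
rewrite /sym_fst arc_sumD mul2n -addnn; congr (_ + _).
rewrite /arc_sum (reindex_inj (@perm_inj _ s)) /=.
by apply: eq_bigr => i _; rewrite sK.
Qed.

Lemma arc_sum_sym_snd g : arc_sum (sym_snd g) = 2 * arc_sum g.
Proof.
rewrite /sym_snd arc_sumD mul2n -addnn; congr (_ + _).
rewrite /arc_sum; apply: eq_bigr => i _.
by rewrite (reindex_inj (@perm_inj _ s)) /=; apply: eq_bigr => j _; rewrite sK.
Qed.

Lemma arc_sum_sym_exch g : arc_sum (sym_exch g) = 2 * arc_sum g.
Proof. by rewrite /sym_exch arc_sumD mul2n -addnn /arc_sum exchange_big. Qed.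

Lemma arc_sum_symmetrize g : arc_sum (symmetrize g) = 8 * arc_sum g.
Proof. by rewrite arc_sum_sym_exch arc_sum_sym_snd arc_sum_sym_fst !mulnA. Qed.

Lemma total_disp_arc_sum : total_disp s = arc_sum cover_term.
Proof.
have sum_upto a b : b < n -> \sum_(j < n) ((a < j <= b) : nat) = b - a.
  move=> bn; rewrite (eq_bigr (fun j : 'I_n => ((a < j) && (j < b.+1) : nat))) //.
  by rewrite sum_ord_between; lia.
rewrite /total_disp /arc_sum; apply: eq_bigr => i _.
rewrite /cover_term big_split /= !sum_upto //; lia.
Qed.

Lemma inv_count_arc_sum : inv_count s = arc_sum inversion_term.
Proof. by rewrite /inv_count card_set_sum /arc_sum pair_bigA. Qed.

Lemma arc_sum_endpoint_term : arc_sum endpoint_term = 8 * transp_dist s.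
Proof.
have per_arc (i : 'I_n) :
    \sum_(j < n) endpoint_term i (s i) j (s j) = 4 * ((i < s i) + (s i < i)).
  by rewrite -big_distrr big_split /= !sum_ord_eq; lia.
rewrite transp_dist_involution // /arc_sum (eq_bigr _ (fun i _ => per_arc i)).
rewrite -big_distrr big_split /=.
have -> : \sum_(i < n) (s i < i : nat) = \sum_(i < n) (i < s i : nat).
  by rewrite (reindex_inj (@perm_inj _ s)) /=; apply: eq_bigr => i _; rewrite sK.
by rewrite addnn -mul2n mulnA.
Qed.

Lemma total_disp_involution :
  total_disp s = inv_count s + transp_dist s + 2 * arc_sum crossing_term.
Proof.
apply/eqP; rewrite -(eqn_pmul2l (isT : 0 < 8)); apply/eqP.
have sym_eq : arc_sum (symmetrize cover_term) = arc_sum (fun a a' b b' =>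
    symmetrize (fun a a' b b' => inversion_term a a' b b' + 2 * crossing_term a a' b b')
      a a' b b' + endpoint_term a a' b b').
  rewrite /arc_sum; apply: eq_bigr => i _; apply: eq_bigr => j _.
  rewrite symmetrize_cover_term // !val_eqE; first by rewrite (inj_eq perm_inj).
  by rewrite -[in LHS](inj_eq (@perm_inj _ s)) sK.
move: sym_eq; rewrite arc_sumD !arc_sum_symmetrize arc_sumD arc_sumMn arc_sum_endpoint_term.
by rewrite total_disp_arc_sum inv_count_arc_sum; lia.
Qed.

Lemma shallow_involutionE : shallow s = noncrossing s.
Proof.
rewrite /shallow total_disp_involution -{1}[_ + _]addn0 eqn_add2l eq_sym muln_eq0 /=.
rewrite /arc_sum sum_nat_eq0; apply: eq_forallb => i.
by rewrite sum_nat_eq0; apply: eq_forallb => j; rewrite eqb0.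
Qed.

End ArcSums.

Lemma decreasing_self_map_rev (f : nat -> nat) p q :
  (forall k, p <= k <= q -> p <= f k <= q) ->
  (forall i j, p <= i -> i < j -> j <= q -> f j < f i) ->
  forall k, p <= k <= q -> f k = p + q - k.
Proof.
move=> f_in f_decr k hk.
have lower d : d <= q - p -> p + d <= f (q - d).
  elim: d => [|d IH] hd; first by have := f_in (q - 0); lia.
  by have := f_decr (q - d.+1) (q - d); lia.
have upper d : d <= q - p -> f (p + d) <= q - d.
  elim: d => [|d IH] hd; first by have := f_in (p + 0); lia.
  by have := f_decr (p + d) (p + d.+1); lia.
have := lower (q - k); have := upper (k - p).
rewrite subKn ?subnKC; lia.
Qed.

(* The reversal of [0, n), except that for x < y < n - x the middle part
   [x, n - x) is reversed separately on its two blocks [x, y) and [y, n - x). *)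
Definition two_block_rev n x y k :=
  if (x < y < n - x) && (x <= k < n - x) then
    (if k < y then x + y - 1 - k else y + n - x - 1 - k)
  else n - 1 - k.

(* The parameter (0, 0) stands for the plain reversal. *)
Definition block_param n x y := (x < y < n - x) || (x == 0) && (y == 0).

Lemma two_block_rev_lt n x y k : k < n -> two_block_rev n x y k < n.
Proof. by rewrite /two_block_rev; do ! case: ifP => ?; lia. Qed.

Lemma two_block_revK n x y k : k < n -> two_block_rev n x y (two_block_rev n x y k) = k.
Proof.
move=> kn; set v := two_block_rev n x y k.
have : v = two_block_rev n x y k by [].
by clearbody v; rewrite /two_block_rev; do ! case: ifP => ?; lia.
Qed.

Lemma two_block_rev_noncrossing n x y i j :
  ~~ [&& i < j, j < two_block_rev n x y i & two_block_rev n x y i < two_block_rev n x y j].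
Proof. by rewrite /two_block_rev; do ! case: ifP => ?; lia. Qed.

Lemma two_block_rev_avoids n x y i j k :
  ~~ [&& i < j, j < k, two_block_rev n x y i < two_block_rev n x y j
       & two_block_rev n x y j < two_block_rev n x y k].
Proof. by rewrite /two_block_rev; do ! case: ifP => ?; lia. Qed.

Lemma two_block_revE_full n x y k : ~~ (x < y < n - x) -> two_block_rev n x y k = n - 1 - k.
Proof. by rewrite /two_block_rev => /negbTE ->. Qed.

Lemma two_block_revE_outer n x y k : ~~ (x <= k < n - x) -> two_block_rev n x y k = n - 1 - k.
Proof. by rewrite /two_block_rev => /negbTE ->; rewrite andbF. Qed.

Lemma two_block_revE_first n x y : x < y < n - x -> two_block_rev n x y x = y - 1.
Proof. by move=> hxy; rewrite /two_block_rev hxy /=; do ! case: ifP => ?; lia. Qed.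

Lemma two_block_rev_proper n x y x' y' : x < y < n - x ->
    (forall k, k < n -> two_block_rev n x y k = two_block_rev n x' y' k) ->
  (x' < y' < n - x') && (x' <= x).
Proof.
move=> hxy e; have := e x; rewrite two_block_revE_first //.
case: (boolP (x' < y' < n - x')) => h'; last by rewrite two_block_revE_full //; lia.
by case: (leqP x' x) => // lt; rewrite two_block_revE_outer; lia.
Qed.

Lemma two_block_rev_inj n x y x' y' :
  block_param n x y -> block_param n x' y' ->
  (forall k, k < n -> two_block_rev n x y k = two_block_rev n x' y' k) -> (x, y) = (x', y').
Proof.
rewrite /block_param => hxy hxy' e.
have e' k (kn : k < n) := esym (e k kn).
case: (boolP (x < y < n - x)) => [p | np].
  have /andP [p' le_x'x] := two_block_rev_proper p e.
  have /andP [_ le_xx'] := two_block_rev_proper p' e'.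
  have ex : x' = x by apply/eqP; rewrite eqn_leq le_x'x.
  move: p' e; rewrite ex => p' e; suff -> : y = y' by [].
  by have := e x; rewrite !two_block_revE_first //; lia.
case: (boolP (x' < y' < n - x')) => [p' | np'].
  by have /andP [] := two_block_rev_proper p' e'; rewrite (negbTE np).
move: hxy hxy'; rewrite (negbTE np) (negbTE np') /=.
by case/andP => /eqP -> /eqP -> /andP [/eqP -> /eqP ->].
Qed.

Section NoncrossingAvoider.
Variables (n : nat) (f : nat -> nat).
Hypothesis f_lt : forall k, k < n -> f k < n.
Hypothesis fK : forall k, k < n -> f (f k) = k.
Hypothesis f_noncrossing : forall i j, i < n -> j < n -> ~~ [&& i < j, j < f i & f i < f j].
Hypothesis f_avoids : forall i j k, i < n -> j < n -> k < n ->
  ~~ [&& i < j, j < k, f i < f j & f j < f k].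

Section FirstDeviation.
Variable x : nat.
Hypothesis x_lt : x < n.
Hypothesis f_outer : forall k, k < x -> f k = n - 1 - k.
Hypothesis fx_neq : f x != n - 1 - x.

Lemma dev_rev_outside k : k < n -> (k < x) || (n - 1 - x < k) -> f k = n - 1 - k.
Proof.
move=> kn /orP [/f_outer // | hk].
by have := @fK (n - 1 - k); rewrite [f (n - 1 - k)]f_outer ?subKn; lia.
Qed.

Lemma dev_middle k : x <= k <= n - 1 - x -> x <= f k <= n - 1 - x.
Proof.
move=> hk; case: (boolP ((f k < x) || (n - 1 - x < f k))) => out; last lia.
have kn : k < n by lia.
have fkn := f_lt kn.
by have := fK kn; rewrite (@dev_rev_outside (f k)) //; lia.
Qed.

Lemma dev_bounds : x <= f x < n - 1 - x.
Proof.
have mid : x <= n - 1 - x.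
  by rewrite leqNgt; apply: contra fx_neq => h; rewrite dev_rev_outside ?h ?orbT.
by have := @dev_middle x; lia.
Qed.

Lemma dev_left k : x <= k <= f x -> x <= f k <= f x.
Proof.
move=> hk; have := dev_bounds; have := @dev_middle k.
have [-> | k_ne_fx] := eqVneq k (f x); first by rewrite fK; lia.
have [-> | k_ne_x] := eqVneq k x; first lia.
by have := @f_noncrossing x k; lia.
Qed.

Lemma dev_right k : f x < k <= n - 1 - x -> f x < f k <= n - 1 - x.
Proof.
move=> hk; have := dev_bounds; have := @dev_middle k.
case: (leqP (f k) (f x)) => h; last lia.
by have := @dev_left (f k); rewrite fK; lia.
Qed.

Lemma dev_left_decr i j : x <= i -> i < j -> j <= f x -> f j < f i.
Proof.
move=> hi hij hj; have fxb := dev_bounds.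
case: (ltngtP (f i) (f j)) => // h.
  have := @dev_right (n - 1 - x); have := @dev_left j.
  by have := @f_avoids i j (n - 1 - x); lia.
by have := @fK i; rewrite h fK; lia.
Qed.

Lemma dev_right_decr i j : f x < i -> i < j -> j <= n - 1 - x -> f j < f i.
Proof.
move=> hi hij hj; have fxb := dev_bounds.
case: (ltngtP (f i) (f j)) => // h.
  by have := @dev_right i; have := @f_avoids x i j; lia.
by have := @fK i; rewrite h fK; lia.
Qed.

Lemma dev_two_block_rev k : k < n -> f k = two_block_rev n x (f x).+1 k.
Proof.
move=> kn; have fxb := dev_bounds.
have left := decreasing_self_map_rev dev_left dev_left_decr.
have right := decreasing_self_map_rev dev_right dev_right_decr.
rewrite /two_block_rev; case: ifP => [/andP [_ mid] | out].
  by case: ifP => blk; [rewrite left | rewrite right]; lia.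
by apply: dev_rev_outside; move/negbT: out; lia.
Qed.

End FirstDeviation.

Lemma noncrossing_avoider_two_block_rev :
  exists x y, block_param n x y /\ forall k, k < n -> f k = two_block_rev n x y k.
Proof.
case: (boolP [exists k : 'I_n, f k != n - 1 - k]) => [/existsP [k0 hk0] | /existsPn rev].
  have exP : exists k, (k < n) && (f k != n - 1 - k) by exists k0; rewrite ltn_ord.
  case: (ex_minnP exP) => x /andP [x_lt fx_neq] x_min.
  have f_outer k : k < x -> f k = n - 1 - k.
    move=> kx; have kn : k < n by lia.
    by apply/eqP; apply: contraTT kx => fk_neq; rewrite -leqNgt x_min // kn.
  have := dev_bounds x_lt f_outer fx_neq; rewrite /block_param => fxb.
  by exists x, (f x).+1; split; [lia | exact: dev_two_block_rev].
exists 0, 0; split=> // k kn.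
by have := rev (Ordinal kn); rewrite negbK => /eqP ->.
Qed.

End NoncrossingAvoider.

Definition block_fun n x y (i : 'I_n) : 'I_n := Ordinal (two_block_rev_lt x y (ltn_ord i)).

Lemma block_funK n x y : involutive (@block_fun n x y).
Proof. by move=> i; apply: val_inj; apply: two_block_revK. Qed.

Definition block_perm n x y : 'S_n := perm (can_inj (@block_funK n x y)).

Lemma block_permE n x y (i : 'I_n) : (block_perm n x y i : nat) = two_block_rev n x y i.
Proof. by rewrite permE. Qed.

Lemma block_permK n x y : involutive (block_perm n x y).
Proof. by move=> i; rewrite !permE block_funK. Qed.

Lemma block_perm_shallow_avoiding_involution n x y :
  [&& shallow (block_perm n x y), avoids123 (block_perm n x y) & involution (block_perm n x y)].
Proof.
have bK := @block_permK n x y.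
rewrite shallow_involutionE //; apply/and3P; split; last exact/involutionP.
  apply/forallP => i; apply/forallP => j; rewrite !block_permE.
  exact: two_block_rev_noncrossing.
apply/forallP => i; apply/forallP => j; apply/forallP => k; rewrite !block_permE.
exact: two_block_rev_avoids.
Qed.

Definition perm_nat n (s : 'S_n) (k : nat) : nat :=
  oapp (fun i : 'I_n => val (s i)) k (insub k).

Lemma perm_natE n (s : 'S_n) (i : 'I_n) : perm_nat s i = s i.
Proof. by rewrite /perm_nat valK. Qed.

Lemma shallow_avoiding_involution_block_perm n (s : 'S_n) :
  [&& shallow s, avoids123 s & involution s] ->
  exists x y, block_param n x y /\ s = block_perm n x y.
Proof.
case/and3P=> + av /involutionP sK; rewrite shallow_involutionE // => nc.
have ord k (kn : k < n) : k = Ordinal kn by [].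
have [x [y [xy e]]] :
    exists x y, block_param n x y /\ forall k, k < n -> perm_nat s k = two_block_rev n x y k.
  apply: noncrossing_avoider_two_block_rev => [k kn | k kn | i j iN jN | i j k iN jN kN].
  - by rewrite (ord k kn) perm_natE.
  - by rewrite (ord k kn) !perm_natE sK.
  - rewrite (ord i iN) (ord j jN) !perm_natE.
    exact: (forallP (forallP nc (Ordinal iN)) (Ordinal jN)).
  - rewrite (ord i iN) (ord j jN) (ord k kN) !perm_natE.
    exact: (forallP (forallP (forallP av (Ordinal iN)) (Ordinal jN)) (Ordinal kN)).
exists x, y; split=> //; apply/permP => i; apply: ord_inj.
by rewrite block_permE -e // perm_natE.
Qed.

Lemma sum_inner_widths N : \sum_(x < N) (N - x - x.+1) = N ^ 2 %/ 4.
Proof.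
suff : \sum_(x < N) (N - x - x.+1) = N ^ 2 %/ 4 /\
       \sum_(x < N.+1) (N.+1 - x - x.+1) = N.+1 ^ 2 %/ 4 by case.
elim: N => [|N [IH1 IH2]]; first by rewrite big_ord0 big_ord1.
split=> //; rewrite big_ord_recl /=.
have -> : \sum_(i < N.+1) (N.+2 - bump 0 i - (bump 0 i).+1) = \sum_(i < N.+1) (N - i - i.+1).
  by apply: eq_bigr => i _; rewrite /bump /=; lia.
rewrite big_ord_recr /= IH1.
have -> : N.+2 ^ 2 = N.+1 * 4 + N ^ 2 by rewrite !expnS expn0; nia.
by rewrite divnMDl //; lia.
Qed.

Definition block_params n : {set 'I_n * 'I_n} := [set p : 'I_n * 'I_n | block_param n p.1 p.2].

Lemma card_block_params n : 0 < n -> #|block_params n| = n ^ 2 %/ 4 + 1.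
Proof.
case: n => // m _; rewrite card_set_sum.
rewrite -(pair_bigA _ (fun x y : 'I_m.+1 => block_param m.+1 x y : nat)) /=.
have one : \sum_(y < m.+1) ((y : nat) == 0 : nat) = 1 := sum_ord_eq ord0.
rewrite -sum_inner_widths -one -big_split /=; apply: eq_bigr => x _.
have -> : \sum_(y < m.+1) (block_param m.+1 x y : nat) =
    \sum_(y < m.+1) ((x < y) && (y < m.+1 - x) : nat)
    + (x == 0 :> nat) * \sum_(y < m.+1) ((y : nat) == 0 : nat).
  by rewrite big_distrr -big_split; apply: eq_bigr => y _; rewrite /block_param /=; lia.
by rewrite sum_ord_between one; have := ltn_ord x; lia.
Qed.

Lemma shallow_avoiding_involutionsE n : 0 < n ->
  [set s : 'S_n | [&& shallow s, avoids123 s & involution s]] =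
  [set block_perm n p.1 p.2 | p : 'I_n * 'I_n in block_params n].
Proof.
move=> n_gt0; apply/setP => s; rewrite inE.
apply/idP/imsetP => [/shallow_avoiding_involution_block_perm | [p _ ->]].
  case=> x [y [xy ->]].
  have [x_lt y_lt] : x < n /\ y < n by move: xy; rewrite /block_param; lia.
  by exists (Ordinal x_lt, Ordinal y_lt); rewrite ?inE.
exact: block_perm_shallow_avoiding_involution.
Qed.

Lemma block_perm_inj n :
  {in block_params n &, injective (fun p : 'I_n * 'I_n => block_perm n p.1 p.2)}.
Proof.
move=> [x y] [x' y']; rewrite !inE /= => xy xy' e.
have same_fun k (kn : k < n) : two_block_rev n x y k = two_block_rev n x' y' k.
  by rewrite -!(block_permE _ _ (Ordinal kn)) e.
by case: (two_block_rev_inj xy xy' same_fun) => ex ey; congr pair; apply: ord_inj.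
Qed.

Theorem theorem5p4 (n : nat) : 1 <= n ->
  #|[set s : 'S_n | [&& shallow s, avoids123 s & involution s]]| = (n ^ 2) %/ 4 + 1.
Proof.
move=> n_gt0; rewrite shallow_avoiding_involutionsE // card_in_imset ?card_block_params //.
exact: block_perm_inj.
Qed.
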